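(* Let $R$ be a commutative ring with unit, $Q=(V,E,X,s,t,l)$ a labelled quiver, and let $f,g\in R\langle X\rangle$ be compatible with $Q$ such that $s(f)\cap t(g)\neq\emptyset$. Then $fg$ is compatible with $Q$ and \[\sigma(fg)\supseteq\{(u,w)\in s(g)\times t(f) \mid \exists v\in s(f)\cap t(g): (u,v)\in\sigma(g)\wedge (v,w)\in\sigma(f)\}.\] If in addition $f$ and $g$ are uniformly compatible with $Q$ and $fg\neq 0$, then equality holds and $fg$ is uniformly compatible as well.
   Context: $R\langle X\rangle$ is the free algebra of noncommutative polynomials over $R$ in indeterminates $X$, with monomials the words in $\langle X\rangle$ (including the empty word $1$); $\operatorname{supp}(f)$ is the set of monomials with nonzero coefficient. A labelled quiver $Q=(V,E,X,s,t,l)$ has vertices $V$, edges $E$, source/target maps $s,t:E\to V$ and labelling $l:E\to X$. A nonempty path $p=e_n\cdots e_1$ (with $s(e_{i+1})=t(e_i)$) has label $l(e_n)\cdots l(e_1)$, source $s(e_1)$, target $t(e_n)$; each vertex $v$ has an empty path with label $1$ and source and target $v$. For a monomial $m$, $\sigma(m)=\{(s(p),t(p)) : p \text{ a path with } l(p)=m\}$; for a polynomial $f$, $\sigma(f)=\bigcap_{m\in\operatorname{supp}(f)}\sigma(m)$. The sets of sources and targets of $f$ are $s(f)=\{v\in V\mid \exists w: (v,w)\in\sigma(f)\}$ and $t(f)=\{w\in V\mid\exists v:(v,w)\in\sigma(f)\}$. $f$ is compatible with $Q$ if $\sigma(f)\neq\emptyset$, and uniformly compatible if it is compatible and all $m\in\operatorname{supp}(f)$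 have the same set $\sigma(m)$. *)

From mathcomp Require Import all_boot all_order all_algebra.
From Stdlib Require List.
Set Implicit Arguments. Unset Strict Implicit. Unset Printing Implicit Defensive.
Import GRing.Theory.
Local Open Scope ring_scope.

(* Noncommutative polynomials R<X>: coefficient functions on words (seq X),
   the empty word [::] being the monomial 1.  Elements of R<X> are those with
   finite support (hypothesis [ncfinsupp]). *)
Definition ncpoly (R : pzRingType) (X : Type) := seq X -> R.

Definition ncfinsupp (R : pzRingType) (X : Type) (f : ncpoly R X) : Prop :=
  exists S : seq (seq X), forall m, f m != 0 -> Stdlib.Lists.List.In m S.

Definition ncmul (R : pzRingType) (X : Type) (f g : ncpoly R X) : ncpoly R X :=
  fun w => \sum_(i < (size w).+1) f (take i w) * g (drop i w).

Section Quiver.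
Variables (V E X : Type) (s t : E -> V) (l : E -> X).

(* A nonempty path e_n ... e_1 is represented by the list [:: e_n; ...; e_1];
   consecutiveness: s(e_{i+1}) = t(e_i). *)
Fixpoint is_path (p : seq E) : Prop :=
  match p with
  | a :: ((b :: _) as r) => s a = t b /\ is_path r
  | _ => True
  end.

Definition sigma_mon (m : seq X) (v w : V) : Prop :=
  (m = [::] /\ v = w) \/
  exists (e : E) (p : seq E),
    is_path (e :: p) /\ map l (e :: p) = m /\ s (last e p) = v /\ t e = w.

Definition sigma_pol (R : pzRingType) (f : ncpoly R X) (v w : V) : Prop :=
  forall m, f m != 0 -> sigma_mon m v w.

Definition sources (R : pzRingType) (f : ncpoly R X) (v : V) : Prop :=
  exists w, sigma_pol f v w.

Definition targets (R : pzRingType) (f : ncpoly R X) (w : V) : Prop :=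
  exists v, sigma_pol f v w.

Definition compatible (R : pzRingType) (f : ncpoly R X) : Prop :=
  exists v w, sigma_pol f v w.

Definition unif_compatible (R : pzRingType) (f : ncpoly R X) : Prop :=
  compatible f /\
  forall m m', f m != 0 -> f m' != 0 ->
    forall v w, sigma_mon m v w <-> sigma_mon m' v w.

End Quiver.

From mathcomp Require Import all_boot all_order all_algebra.
From Stdlib Require Import Classical.
Set Implicit Arguments. Unset Strict Implicit. Unset Printing Implicit Defensive.
Import GRing.Theory.
Local Open Scope ring_scope.

(* Every monomial of fg is a concatenation ab with f(a) != 0 and g(b) != 0, and
   a path labelled ab is exactly a path labelled b followed by a path labelled a.
   Hence a pair (u, w) joined through sigma(g) and then sigma(f) lies in
   sigma(fg).  Under uniform compatibility sigma(f) = sigma(a) and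
   sigma(g) = sigma(b) for every such factorization, so splitting a path of
   any single monomial of fg gives the converse, and sigma of every monomial
   of fg is the same composite relation. *)

Section Walks.
Variables (V E X : Type) (s t : E -> V) (l : E -> X).

(* Edges are listed last first, as in [is_path]; unlike nonempty paths, walks
   include the empty walk at each vertex, so concatenation is total. *)
Fixpoint walk (q : seq E) (v w : V) : Prop :=
  if q is e :: p then t e = w /\ walk p v (s e) else v = w.

Lemma walk_consE e p v w :
  walk (e :: p) v w <-> t e = w /\ is_path s t (e :: p) /\ s (last e p) = v.
Proof.
elim: p e w => [|b r IH] e w; first by split=> /= [[-> ->] | [-> [_ ->]]].
have -> : walk (e :: b :: r) v w = (t e = w /\ walk (b :: r) v (s e)) by [].
rewrite IH /=; split; first by case=> -> [-> [? ->]].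
by case=> -> [[-> ?] ->].
Qed.

Lemma sigma_monE m v w :
  sigma_mon s t l m v w <-> exists q, map l q = m /\ walk q v w.
Proof.
split=> [[[-> ->] | [e [p [Hp [Hm [Hs Ht]]]]]] | [[|e p] [Hm Hw]]].
- by exists [::].
- by exists (e :: p); split; last exact/walk_consE.
- by left; rewrite -Hm.
- by right; exists e, p; move/walk_consE: Hw => [? [? ?]].
Qed.

Lemma walk_catE q1 q2 u w :
  walk (q1 ++ q2) u w <-> exists v, walk q2 u v /\ walk q1 v w.
Proof.
elim: q1 w => [|e r IH] w /=.
  by split=> [H | [v [H <-]]]; first exists w.
rewrite IH /=; split; first by case=> -> [v [H1 H2]]; exists v.
by case=> v [H1 [-> H2]]; split=> //; exists v.
Qed.

Lemma sigma_mon_catE a b u w :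
  sigma_mon s t l (a ++ b) u w <->
  exists v, sigma_mon s t l b u v /\ sigma_mon s t l a v w.
Proof.
split.
  move=> /sigma_monE [q [Hq]].
  rewrite -(cat_take_drop (size a) q) => /walk_catE [v [Hb Ha]].
  exists v; split; apply/sigma_monE.
    by exists (drop (size a) q); rewrite map_drop Hq drop_size_cat.
  by exists (take (size a) q); rewrite map_take Hq take_size_cat.
move=> [v [/sigma_monE [qb [<- Hb]] /sigma_monE [qa [<- Ha]]]].
apply/sigma_monE; exists (qa ++ qb); rewrite map_cat; split=> //.
by apply/walk_catE; exists v.
Qed.

End Walks.

Section Product.
Variables (R : pzRingType) (V E X : Type) (s t : E -> V) (l : E -> X).
Implicit Types f g : ncpoly R X.

Definition sigma_comp f g (u w : V) : Prop :=
  exists v, sigma_pol s t l g u v /\ sigma_pol s t l f v w.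

Lemma sigma_compE f g u w :
  (sources s t l g u /\ targets s t l f w /\
   exists v, (sources s t l f v /\ targets s t l g v) /\
             sigma_pol s t l g u v /\ sigma_pol s t l f v w) <->
  sigma_comp f g u w.
Proof.
split=> [[_ [_ [v [_ Hv]]]] | [v [Hg Hf]]]; first by exists v.
split; [by exists v | split; first by exists v].
by exists v; split; first by split; [exists w | exists u].
Qed.

Lemma ncmul_neq0 f g m : ncmul f g m != 0 ->
  exists i, f (take i m) != 0 /\ g (drop i m) != 0.
Proof.
case: (boolP [exists i : 'I_(size m).+1,
                (f (take i m) != 0) && (g (drop i m) != 0)]).
  by move=> /existsP [i /andP [Hf Hg]]; exists i.
rewrite negb_exists => /forallP Hzero; rewrite /ncmul big1 ?eqxx // => i _.
by case/nandP: (Hzero i) => /negPn/eqP ->; rewrite ?mul0r ?mulr0.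
Qed.

Lemma sigma_pol_ncmul f g u w :
  sigma_comp f g u w -> sigma_pol s t l (ncmul f g) u w.
Proof.
move=> [v [Hg Hf]] m /ncmul_neq0 [i [Ha Hb]].
by rewrite -(cat_take_drop i m); apply/sigma_mon_catE; exists v; auto.
Qed.

Lemma unif_sigma_pol f m v w :
  unif_compatible s t l f -> f m != 0 -> sigma_mon s t l m v w ->
  sigma_pol s t l f v w.
Proof. by move=> [_ Hunif] Hm Hmvw m' Hm'; apply/(Hunif m m' Hm Hm'). Qed.

Lemma unif_sigma_mon_ncmulE f g m :
  unif_compatible s t l f -> unif_compatible s t l g -> ncmul f g m != 0 ->
  forall u w, sigma_mon s t l m u w <-> sigma_comp f g u w.
Proof.
move=> Uf Ug Hm u w; split; last by move/sigma_pol_ncmul; apply.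
have [i [Ha Hb]] := ncmul_neq0 Hm.
rewrite -(cat_take_drop i m) => /sigma_mon_catE [v [Hgv Hfv]].
exists v; split; [exact: unif_sigma_pol Hb Hgv | exact: unif_sigma_pol Ha Hfv].
Qed.

End Product.

Theorem lemma3p7 (R : comPzRingType) (V E X : Type)
  (s t : E -> V) (l : E -> X) (f g : ncpoly R X) :
  ncfinsupp f -> ncfinsupp g ->
  compatible s t l f -> compatible s t l g ->
  (exists v, sources s t l f v /\ targets s t l g v) ->
  compatible s t l (ncmul f g) /\
  (forall u w,
     (sources s t l g u /\ targets s t l f w /\
      exists v, (sources s t l f v /\ targets s t l g v) /\
                sigma_pol s t l g u v /\ sigma_pol s t l f v w) ->
     sigma_pol s t l (ncmul f g) u w) /\
  (unif_compatible s t l f -> unif_compatible s t l g ->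
   ~ (forall w, ncmul f g w = 0) ->
   (forall u w,
      sigma_pol s t l (ncmul f g) u w <->
      (sources s t l g u /\ targets s t l f w /\
       exists v, (sources s t l f v /\ targets s t l g v) /\
                 sigma_pol s t l g u v /\ sigma_pol s t l f v w)) /\
   unif_compatible s t l (ncmul f g)).
Proof.
move=> _ _ _ _ [v [[w Hf] [u Hg]]].
have Cfg : compatible s t l (ncmul f g).
  by exists u, w; apply: sigma_pol_ncmul; exists v.
split=> //; split; first by move=> u' w' /sigma_compE; apply: sigma_pol_ncmul.
move=> Uf Ug /not_all_ex_not [m0 /eqP Hm0].
have sigma_fgE u' w' :
    sigma_pol s t l (ncmul f g) u' w' <-> sigma_comp s t l f g u' w'.
  split; last exact: sigma_pol_ncmul.
  by move/(_ m0 Hm0)/(unif_sigma_mon_ncmulE Uf Ug Hm0).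
split=> [u' w' | ]; first by rewrite sigma_compE.
split=> // m m' Hm Hm' a b.
by rewrite (unif_sigma_mon_ncmulE Uf Ug Hm) (unif_sigma_mon_ncmulE Uf Ug Hm').
Qed.
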